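(* Complete semantics is serialisable with the selection function $\alpha_{adm}(X,Y,Z)=X\cup Y\cup Z$ and the termination function $\beta_{co}(F,S)=1$ if $\mathrm{IS}^u(F)=\emptyset$ and $\beta_{co}(F,S)=0$ otherwise.
   Context: An abstract argumentation framework (AF) is a pair $F=(A,R)$ with $A$ a finite subset of a fixed universal set of arguments $\mathfrak{A}$ and $R\subseteq A\times A$ ($a\to b$ means $(a,b)\in R$). For $S\subseteq A$: $S^+=\{a\mid \exists b\in S: b\to a\}$, $S^-=\{a\mid\exists b\in S: a\to b\}$; for sets $S,S'$, $S\to S'$ means $S^+\cap S'\neq\emptyset$. $S$ is conflict-free if no $a,b\in S$ with $a\to b$; $S$ defends $b$ if every attacker of $b$ is attacked by some element of $S$; $S$ is admissible if conflict-free and defends all its elements. A complete extension is an admissible set $E$ containing every argument it defends. An initial set is a non-empty admissible set with no non-empty admissible proper subset; $\mathrm{IS}(F)$ is the set of initial sets. An initial set $S$ is unattacked if $S^-=\emptyset$; unchallenged if $S^-\neq\emptyset$ and no $S'\in\mathrm{IS}(F)$ has $S'\to S$; challenged if some $S'\in\mathrm{IS}(F)$ has $S'\to S$. Write $\mathrm{IS}^{u}(F),\mathrm{IS}^{uc}(F),\mathrm{IS}^{c}(F)$ for these sets. The reduct is $F^S=(A',R\cap(A'\times A'))$ with $A'=A\setminus(S\cup S^+)$. A selection function $\alpha$ maps any three sets $X,Y,Z$ of sets of arguments to a subset of $X\cup Y\cup Z$; a termination function $\beta$ maps pairs $(F,S)$ to $\{0,1\}$. Transitions: $(F,S)\to(F^{S'},S\cup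 S')$ whenever $S'\in\alpha(\mathrm{IS}^u(F),\mathrm{IS}^{uc}(F),\mathrm{IS}^c(F))$. $(F,S)\leadsto^{\alpha,\beta}(F',S')$ means $(F',S')$ is reachable from $(F,S)$ in finitely many (possibly zero) transitions and $\beta(F',S')=1$. $\mathcal{E}^{\alpha,\beta}(F)$ is the set of all $S$ with $(F,\emptyset)\leadsto^{\alpha,\beta}(F',S)$ for some $F'$. A semantics $\sigma$ is serialisable with $\alpha,\beta$ if $\sigma(F)=\mathcal{E}^{\alpha,\beta}(F)$ for all AFs $F$. *)

From HB Require Import structures.
From mathcomp Require Import all_boot.
From mathcomp Require Import finmap.
Set Implicit Arguments. Unset Strict Implicit. Unset Printing Implicit Defensive.
Local Open Scope fset_scope.

Section AF.
Variable T : choiceType.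

Record AF := MkAF {
  args : {fset T};
  att : {fset T * T};
  att_wf : att `<=` args `*` args }.

Definition attacks (F : AF) (a b : T) : bool := (a, b) \in att F.

Definition set_attacks_arg (F : AF) (S : {fset T}) (b : T) : bool :=
  has (fun a => attacks F a b) S.

Definition set_attacks (F : AF) (S S' : {fset T}) : Prop :=
  exists a b, a \in S /\ b \in S' /\ attacks F a b.

Definition conflict_free (F : AF) (S : {fset T}) : Prop :=
  forall a b, a \in S -> b \in S -> ~~ attacks F a b.

Definition defends (F : AF) (S : {fset T}) (b : T) : Prop :=
  forall a, attacks F a b -> exists2 c, c \in S & attacks F c a.

Definition admissible (F : AF) (S : {fset T}) : Prop :=
  [/\ S `<=` args F, conflict_free F S & forall b, b \in S -> defends F S b].

Definition complete (F : AF) (E : {fset T}) : Prop :=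
  admissible F E /\ forall b, b \in args F -> defends F E b -> b \in E.

Definition initial (F : AF) (S : {fset T}) : Prop :=
  [/\ admissible F S, S != fset0 &
      forall S', S' `<` S -> S' != fset0 -> ~ admissible F S'].

Definition unattacked_set (F : AF) (S : {fset T}) : Prop :=
  forall a b, b \in S -> ~~ attacks F a b.

Definition IS_u (F : AF) (S : {fset T}) : Prop :=
  initial F S /\ unattacked_set F S.
Definition IS_uc (F : AF) (S : {fset T}) : Prop :=
  [/\ initial F S, ~ unattacked_set F S &
      ~ exists S', initial F S' /\ set_attacks F S' S].
Definition IS_c (F : AF) (S : {fset T}) : Prop :=
  initial F S /\ exists S', initial F S' /\ set_attacks F S' S.

Definition reduct_args (F : AF) (S : {fset T}) : {fset T} :=
  [fset b in args F | (b \notin S) && ~~ set_attacks_arg F S b].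

Lemma reduct_att_wf (F : AF) (S : {fset T}) :
  [fset p in att F | (p.1 \in reduct_args F S) && (p.2 \in reduct_args F S)]
    `<=` reduct_args F S `*` reduct_args F S.
Proof.
apply/fsubsetP => p; rewrite !inE => /andP [_ /andP [H1 H2]].
by rewrite H1 H2.
Qed.

Definition reduct (F : AF) (S : {fset T}) : AF :=
  MkAF (reduct_att_wf F S).

Definition setsys := {fset T} -> Prop.
Definition selection := setsys -> setsys -> setsys -> setsys.
Definition selection_ok (alpha : selection) : Prop :=
  forall X Y Z S, alpha X Y Z S -> X S \/ Y S \/ Z S.
(* termination function: beta F S holds iff beta(F,S) = 1 *)
Definition termination := AF -> {fset T} -> Prop.

Definition step (alpha : selection) (c c' : AF * {fset T}) : Prop :=
  exists2 S', alpha (IS_u c.1) (IS_uc c.1) (IS_c c.1) S' &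
    c' = (reduct c.1 S', c.2 `|` S').

Inductive reach (alpha : selection) : AF * {fset T} -> AF * {fset T} -> Prop :=
| reach_refl c : reach alpha c c
| reach_step c c' c'' : step alpha c c' -> reach alpha c' c'' -> reach alpha c c''.

Definition leadsto (alpha : selection) (beta : termination)
  (c c' : AF * {fset T}) : Prop :=
  reach alpha c c' /\ beta c'.1 c'.2.

Definition serial_ext (alpha : selection) (beta : termination) (F : AF)
  (S : {fset T}) : Prop :=
  exists F', leadsto alpha beta (F, fset0) (F', S).

Definition serialisable (sigma : AF -> {fset T} -> Prop)
  (alpha : selection) (beta : termination) : Prop :=
  forall F S, sigma F S <-> serial_ext alpha beta F S.

Definition alpha_adm : selection := fun X Y Z S => X S \/ Y S \/ Z S.

Definition beta_co : termination := fun F _ => ~ exists S, IS_u F S.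

End AF.

From HB Require Import structures.
From mathcomp Require Import all_boot.
From mathcomp Require Import finmap.
From Stdlib Require Import Classical.
Set Implicit Arguments. Unset Strict Implicit. Unset Printing Implicit Defensive.

(* The states reachable from (F, {}) are exactly the pairs (F^S, S) with S
   admissible.  Soundness: (F^S)^S' = F^(S u S'), and adding an admissible set
   of F^S to an admissible set S of F keeps it admissible.  Completeness: for
   admissible E containing S, E \ S is admissible in F^S, hence contains an
   initial set of F^S, so E is reached from S one initial set at a time.
   Termination: the arguments of F^S that S defends are exactly the unattacked
   arguments of F^S, and an unattacked argument b yields the unattacked initial
   set {b}; so an admissible S is complete iff F^S has no unattacked initial
   set. *)

Section Serialisation.
Local Open Scope fset_scope.
Variable T : choiceType.
Implicit Types (F G : AF T) (S E : {fset T}) (a b : T).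

Lemma attacks_args F a b : attacks F a b -> a \in args F /\ b \in args F.
Proof.
move=> ab; have /fsubsetP/(_ _ ab) := att_wf F.
by rewrite !inE /= => /andP.
Qed.

Lemma AF_eq F G : args F = args G -> attacks F =2 attacks G -> F = G.
Proof.
case: F G => A R wf [A' R' wf'] /= eA eR; subst A'.
have eRR' : R = R' by apply/fsetP => -[a b]; exact: eR.
by subst R'; rewrite (bool_irrelevance wf wf').
Qed.

Lemma set_attacks_argP F S b :
  reflect (exists2 a, a \in S & attacks F a b) (set_attacks_arg F S b).
Proof. exact: hasP. Qed.

Lemma set_attacks_argU F S S' b :
  set_attacks_arg F (S `|` S') b = set_attacks_arg F S b || set_attacks_arg F S' b.
Proof.
apply/set_attacks_argP/orP => [[a]|[]/set_attacks_argP[a aS ab]].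
- by rewrite inE => /orP[aS|aS'] ab; [left|right]; apply/set_attacks_argP; exists a.
- by exists a; rewrite // inE aS.
- by exists a; rewrite // inE aS orbT.
Qed.

Lemma in_reduct_args F S b :
  (b \in reduct_args F S) = [&& b \in args F, b \notin S & ~~ set_attacks_arg F S b].
Proof. by rewrite !inE. Qed.

Lemma attacks_reduct F S a b :
  attacks (reduct F S) a b =
  [&& attacks F a b, a \in reduct_args F S & b \in reduct_args F S].
Proof. by rewrite /attacks /= !inE. Qed.

Lemma reduct0 F : reduct F fset0 = F.
Proof.
have eA : reduct_args F fset0 = args F.
  apply/fsetP => b; rewrite in_reduct_args in_fset0 andbT.
  by case: (set_attacks_argP F fset0 b) => [[a]|]; rewrite ?in_fset0.
apply: (@AF_eq (reduct F fset0) F eA) => a b; rewrite attacks_reduct eA.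
by case ab: (attacks F a b) => //; have [-> ->] := attacks_args ab.
Qed.

Lemma set_attacks_arg_reduct F S S' b :
  S' `<=` reduct_args F S -> b \in reduct_args F S ->
  set_attacks_arg (reduct F S) S' b = set_attacks_arg F S' b.
Proof.
move=> sub bR; apply/set_attacks_argP/set_attacks_argP => -[a aS' ab]; exists a => //.
- by move: ab; rewrite attacks_reduct => /andP[].
- by rewrite attacks_reduct ab (fsubsetP sub) ?bR.
Qed.

Lemma reduct_fsetU F S S' : S' `<=` reduct_args F S ->
  reduct (reduct F S) S' = reduct F (S `|` S').
Proof.
move=> sub.
have eA : reduct_args (reduct F S) S' = reduct_args F (S `|` S').
  apply/fsetP => b; rewrite [LHS]in_reduct_args in_reduct_args.
  rewrite set_attacks_argU in_fsetU negb_or.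
  case bR: (b \in reduct_args F S); move: (bR); rewrite in_reduct_args.
  - by rewrite set_attacks_arg_reduct // => /and3P[-> -> /negbTE ->].
  - by case: (b \in args F); case: (b \in S); case: (set_attacks_arg F S b);
      rewrite /= ?andbF.
apply: (@AF_eq (reduct (reduct F S) S') (reduct F (S `|` S')) eA) => a b.
rewrite !attacks_reduct -eA.
have R2R1 x : x \in reduct_args (reduct F S) S' -> x \in reduct_args F S.
  by rewrite in_reduct_args => /andP[].
apply/and3P/and3P => [[/and3P[ab _ _] aR2 bR2] | [ab aR2 bR2]] //.
by split=> //; apply/and3P; split=> //; apply: R2R1.
Qed.

Lemma attacker_in_reduct_args F S a b : b \in reduct_args F S ->
  attacks F a b -> ~~ set_attacks_arg F S a -> a \in reduct_args F S.
Proof.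
rewrite !in_reduct_args => /and3P[_ _ nSb] ab ->.
rewrite (attacks_args ab).1 andbT /=; apply: contra nSb => aS.
by apply/set_attacks_argP; exists a.
Qed.

Lemma defends_reductE F S b : b \in reduct_args F S ->
  defends F S b <-> forall a, ~~ attacks (reduct F S) a b.
Proof.
move=> bR; split=> [defb a | unatt a ab].
- rewrite attacks_reduct; apply/and3P => -[/defb[c cS ca] aR _].
  by move: aR; rewrite in_reduct_args => /and3P[_ _ /set_attacks_argP]; apply; exists c.
- apply/set_attacks_argP/negPn/negP => nSa.
  by move: (unatt a); rewrite attacks_reduct ab bR (attacker_in_reduct_args bR ab nSa).
Qed.

Lemma defended_unattacked F S b : conflict_free F S -> defends F S b ->
  ~~ set_attacks_arg F S b.
Proof.
move=> cf defb; apply/set_attacks_argP => -[a aS ab].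
by have [c cS ca] := defb a ab; move: (cf c a cS aS); rewrite ca.
Qed.

Lemma exists_IS_uP G :
  (exists U, IS_u G U) <-> exists2 b, b \in args G & forall a, ~~ attacks G a b.
Proof.
split=> [[U [[[sub _ _] neU _] unU]] | [b bG unb]].
- have [u uU] := fset0Pn _ neU.
  by exists u; [exact: (fsubsetP sub) | move=> a; exact: unU uU].
- exists [fset b]; split; last by move=> a x; rewrite in_fset1 => /eqP ->.
  split.
  + split.
    * by apply/fsubsetP => x; rewrite in_fset1 => /eqP ->.
    * by move=> x y _; rewrite in_fset1 => /eqP ->.
    * by move=> x; rewrite in_fset1 => /eqP -> a; rewrite (negbTE (unb a)).
  + by apply/fset0Pn; exists b; rewrite in_fset1.
  + move=> S' ltS'b; move: (fproper_sub ltS'b); rewrite fsubset1.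
    by case/orP=> /eqP eS'; [move: ltS'b; rewrite eS' fproperEneq eqxx | rewrite eS' eqxx].
Qed.

Lemma complete_reductE F S : admissible F S ->
  complete F S <-> ~ exists U, IS_u (reduct F S) U.
Proof.
move=> adS; have [_ cfS _] := adS.
split=> [[_ cmp] /exists_IS_uP[b bR unb] | noU].
- have /(defends_reductE bR) defb := unb.
  by move: bR; rewrite in_reduct_args => /and3P[bA /negP[]]; exact: cmp.
- split=> // b bA defb; apply/negPn/negP => bS; apply: noU; apply/exists_IS_uP.
  have bR : b \in reduct_args F S by rewrite in_reduct_args bA bS defended_unattacked.
  by exists b; last exact/(defends_reductE bR).
Qed.

Lemma reduct_args_sub F S : reduct_args F S `<=` args F.
Proof. by apply/fsubsetP => b; rewrite in_reduct_args => /andP[]. Qed.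

Lemma admissible_fsetU F S S' : admissible F S -> admissible (reduct F S) S' ->
  admissible F (S `|` S').
Proof.
case=> subS cfS defS [subS' cfS' defS'].
have S'R : {subset S' <= reduct_args F S} := fsubsetP subS'.
have nSS' b : b \in S' -> ~~ set_attacks_arg F S b.
  by move/S'R; rewrite in_reduct_args => /and3P[].
split.
- by rewrite fsubUset subS (fsubset_trans subS' (reduct_args_sub F S)).
- move=> a b; rewrite !in_fsetU => /orP[aS|aS'] /orP[bS|bS'].
  + exact: cfS.
  + by apply: contra (nSS' b bS') => ab; apply/set_attacks_argP; exists a.
  + apply/negP => ab; have [c cS ca] := defS b bS a ab.
    by move/negP: (nSS' a aS'); apply; apply/set_attacks_argP; exists c.
  + by move: (cfS' a b aS' bS'); rewrite attacks_reduct !S'R // !andbT.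
- move=> b; rewrite in_fsetU => /orP[bS|bS'] a ab.
  + by have [c cS ca] := defS b bS a ab; exists c; rewrite // in_fsetU cS.
  + case: (boolP (set_attacks_arg F S a)) => [/set_attacks_argP[c cS ca] | nSa].
      by exists c; rewrite // in_fsetU cS.
    have aR := attacker_in_reduct_args (S'R b bS') ab nSa.
    have aRb : attacks (reduct F S) a b by rewrite attacks_reduct ab aR S'R.
    have [c cS' ca] := defS' b bS' a aRb.
    exists c; first by rewrite in_fsetU cS' orbT.
    by move: ca; rewrite attacks_reduct => /andP[].
Qed.

Lemma admissible_reduct_fsetD F S E : admissible F E -> S `<=` E ->
  admissible (reduct F S) (E `\` S).
Proof.
case=> subE cfE defE sSE.
have DR : {subset E `\` S <= reduct_args F S}.
  move=> b; rewrite in_fsetD in_reduct_args => /andP[bS bE].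
  rewrite bS (fsubsetP subE) //=; apply/set_attacks_argP => -[a aS ab].
  by move: (cfE a b (fsubsetP sSE a aS) bE); rewrite ab.
split.
- exact/fsubsetP.
- move=> a b; rewrite !in_fsetD => /andP[_ aE] /andP[_ bE].
  by rewrite attacks_reduct (negbTE (cfE a b aE bE)).
- move=> b bD a; rewrite attacks_reduct => /and3P[ab aR bR].
  have bE : b \in E by move: bD; rewrite in_fsetD => /andP[].
  have [c cE ca] := defE b bE a ab.
  have cD : c \in E `\` S.
    move: aR; rewrite in_reduct_args in_fsetD cE andbT => /and3P[_ _].
    by apply: contra => cS; apply/set_attacks_argP; exists c.
  by exists c; rewrite // attacks_reduct ca aR DR.
Qed.

Lemma admissible0 F : admissible F fset0.
Proof. by split=> [|a b|b]; rewrite ?fsub0set ?in_fset0. Qed.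

Lemma admissible_sub_initial F E : admissible F E -> E != fset0 ->
  exists2 S, initial F S & S `<=` E.
Proof.
have [n] := ubnP #|`E|; elim: n E => // n IH E ltEn adE neE.
have [iE | niE] := classic (initial F E); first by exists E.
have [S [ltSE neS adS]] : exists S, [/\ S `<` E, S != fset0 & admissible F S].
  by apply: NNPP => noS; apply: niE; split=> // S ltSE neS adS; apply: noS; exists S.
have [S0 iS0 sS0S] := IH S (leq_trans (fproper_ltn_card ltSE) (ltnSE ltEn)) adS neS.
by exists S0 => //; apply: fsubset_trans sS0S (fproper_sub ltSE).
Qed.

Lemma initial_selected_adm F S : initial F S ->
  alpha_adm (IS_u F) (IS_uc F) (IS_c F) S.
Proof.
move=> iS; have [unS | attS] := classic (unattacked_set F S); first by left.
have [chS | unchS] := classic (exists S', initial F S' /\ set_attacks F S' S).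
- by right; right.
- by right; left.
Qed.

Lemma selected_initial (alpha : selection T) F S : selection_ok alpha ->
  alpha (IS_u F) (IS_uc F) (IS_c F) S -> initial F S.
Proof. by move=> ok /ok[[]|[[]|[]]]. Qed.

Lemma reach_admissible (alpha : selection T) F (c c' : AF T * {fset T}) :
  selection_ok alpha -> reach alpha c c' ->
  c.1 = reduct F c.2 -> admissible F c.2 ->
  c'.1 = reduct F c'.2 /\ admissible F c'.2.
Proof.
move=> ok; elim=> // -[G S] c1 c2 [S' selS' ->] _ IH /= eG adS; subst G.
have [adS' _ _] := selected_initial ok selS'.
apply: IH => /=; last exact: admissible_fsetU.
by rewrite reduct_fsetU //; case: adS'.
Qed.

Lemma admissible_reach F S E : admissible F E -> S `<=` E ->
  reach (@alpha_adm T) (reduct F S, S) (reduct F E, E).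
Proof.
move=> adE; have [n] := ubnP #|`E `\` S|; elim: n S => // n IH S ltn sSE.
have [DS0 | neD] := eqVneq (E `\` S) fset0.
  have -> : S = E by apply/eqP; rewrite eqEfsubset sSE -fsetD_eq0 DS0.
  exact: reach_refl.
have [S' iS' sS'D] := admissible_sub_initial (admissible_reduct_fsetD adE sSE) neD.
have [[subS' _ _] neS' _] := iS'.
apply: (reach_step (c' := (reduct F (S `|` S'), S `|` S'))).
  by exists S'; [exact: initial_selected_adm | rewrite /= reduct_fsetU].
have sUE : S `|` S' `<=` E by rewrite fsubUset sSE (fsubset_trans sS'D (fsubsetDl _ _)).
apply: IH (sUE); apply: leq_trans (ltnSE ltn); apply/fproper_ltn_card/fsetDpS => //.
apply: fproperUl; have [x xS'] := fset0Pn _ neS'.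
have := fsubsetP sS'D x xS'; rewrite in_fsetD => /andP[xS _].
by apply: contra xS => /fsubsetP; apply.
Qed.

End Serialisation.

Theorem theorem3 (T : choiceType) :
  serialisable (@complete T) (@alpha_adm T) (@beta_co T).
Proof.
move=> F S; split=> [cS | [G [r noU]]].
- exists (reduct F S); split; last exact: (complete_reductE (proj1 cS)).1 cS.
  by rewrite -{1}(reduct0 F); apply: admissible_reach (proj1 cS) (fsub0set S).
- have ok : selection_ok (@alpha_adm T) by [].
  have [/= eG adS] := reach_admissible ok r (esym (reduct0 F)) (admissible0 F).
  by apply/(complete_reductE adS); rewrite -eG.
Qed.
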